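(* Let $U:\mathbb{R}^d\to\mathbb{R}$ be twice continuously differentiable with $\nabla U(0)=0$ and $\sup_x\|\mathrm{D}^2U(x)\|\le\mathtt{L}$, and assume there exist $\mathtt{m}>0$, $\mathtt{K}\ge0$ with $\mathrm{D}^2U(x)[y,y]\ge\mathtt{m}$ whenever $\|x\|\ge\mathtt{K}$, $\|y\|=1$. Then for all $x,y\in\mathbb{R}^d$ with $\|x\|\vee\|y\|\ge\mathtt{K}+8\mathtt{K}\mathtt{L}/\mathtt{m}$, $$\langle\nabla U(x)-\nabla U(y),x-y\rangle\ge(\mathtt{m}/2)\|x-y\|^2.$$ *)

(* R^d is represented by row vectors 'rV[R]_d. *)
From mathcomp Require Import all_boot all_order all_algebra.
From mathcomp Require Import all_classical all_reals all_analysis.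
Set Implicit Arguments. Unset Strict Implicit. Unset Printing Implicit Defensive.
Import Order.TTheory GRing.Theory Num.Theory.
Import numFieldNormedType.Exports.
Local Open Scope ring_scope.

Section Defs.
Variables (R : realType) (d : nat).

Definition dotv (x y : 'rV[R]_d) : R := \sum_(i < d) x ord0 i * y ord0 i.
Definition enorm (x : 'rV[R]_d) : R := Num.sqrt (dotv x x).

Definition evec (i : 'I_d) : 'rV[R]_d := delta_mx ord0 i.

Definition grad (U : 'rV[R]_d -> R) (x : 'rV[R]_d) : 'rV[R]_d :=
  \row_i derive U x (evec i).

(* second derivative as a bilinear form: D^2 U(x)[y,z] = D_z (D_y U)(x) *)
Definition hess (U : 'rV[R]_d -> R) (x y z : 'rV[R]_d) : R :=
  derive (fun w => derive U w y) x z.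

(* twice continuously differentiable: U is differentiable, every directional
   derivative w |-> D_y U(w) is differentiable, and every second directional
   derivative w |-> D^2 U(w)[y,z] is continuous (equivalent to C^2 on R^d). *)
Definition C2 (U : 'rV[R]_d -> R) : Prop :=
  (forall x, differentiable U x) /\
  (forall y x, differentiable (fun w => derive U w y) x) /\
  (forall y z, continuous (fun w => hess U w y z)).

End Defs.

From mathcomp Require Import all_boot all_order all_algebra.
From mathcomp Require Import all_classical all_reals all_analysis.
From mathcomp Require Import ring lra.
Import Order.TTheory GRing.Theory Num.Theory.
Import numFieldNormedType.Exports.
Set Implicit Arguments. Unset Strict Implicit.
Local Open Scope ring_scope.

(* Write v = x - y and G t = D U (y + t v) [v], so that G 1 - G 0 is the right-hand side
   and G' t = D^2 U (y + t v) [v, v], which is at least -L |v|^2 everywhere and at least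
   m |v|^2 at points of norm >= K.  If |v| < 8KL/m, the whole segment stays outside the
   ball of radius K, because max(|x|, |y|) >= K + 8KL/m; hence G 1 - G 0 >= m |v|^2.
   Otherwise the segment meets the ball only for t in an interval of length 2K/|v|
   around the foot of the perpendicular from 0 (Pythagoras), so
   G 1 - G 0 >= m |v|^2 - 2 (m + L) K |v| >= (m/2) |v|^2, as 4 (m + L) K <= 8 K L <= m |v|
   (note m <= L). *)

Section Euclidean.
Variables (R : realType) (d : nat).
Implicit Types (x y v : 'rV[R]_d) (t : R).

Lemma dotvC x y : dotv x y = dotv y x.
Proof. by apply: eq_bigr => i _; rewrite mulrC. Qed.

Lemma dotvDl x y v : dotv (x + y) v = dotv x v + dotv y v.
Proof. by rewrite /dotv -big_split; apply: eq_bigr => i _; rewrite !mxE mulrDl. Qed.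

Lemma dotvZl t x y : dotv (t *: x) y = t * dotv x y.
Proof. by rewrite /dotv big_distrr; apply: eq_bigr => i _; rewrite !mxE -mulrA. Qed.

Lemma dotvBl x y v : dotv (x - y) v = dotv x v - dotv y v.
Proof. by rewrite dotvDl -scaleN1r dotvZl mulN1r. Qed.

Lemma dotv0r x : dotv x 0 = 0.
Proof. by rewrite dotvC -(scale0r 0) dotvZl mul0r. Qed.

Lemma dotv_ge0 x : 0 <= dotv x x.
Proof. by apply: sumr_ge0 => i _; rewrite -expr2 sqr_ge0. Qed.

Lemma dotv_eq0 x : (dotv x x == 0) = (x == 0).
Proof.
apply/eqP/eqP => [x0|->]; last by rewrite dotv0r.
have xi2 := @psumr_eq0P _ _ _ (fun i => x ord0 i * x ord0 i)
  (fun i _ => sqr_ge0 (x ord0 i)) x0.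
apply/rowP => i; rewrite mxE; apply/eqP.
by rewrite -sqrf_eq0 expr2 xi2.
Qed.

Lemma dotv_gt0 x : x != 0 -> 0 < dotv x x.
Proof. by move=> x0; rewrite lt_def dotv_eq0 x0 dotv_ge0. Qed.

Lemma dotv_lineE y v t : dotv (y + t *: v) (y + t *: v) =
  dotv y y + 2 * t * dotv y v + t ^+ 2 * dotv v v.
Proof.
rewrite !(dotvDl, dotvZl) !(dotvC _ (_ + _)) !(dotvDl, dotvZl) (dotvC v y); ring.
Qed.

Lemma dotv_line_foot y v t : 0 < dotv v v ->
  let t0 := - dotv y v / dotv v v in
  dotv (y + t *: v) (y + t *: v) =
  dotv (y + t0 *: v) (y + t0 *: v) + (t - t0) ^+ 2 * dotv v v.
Proof. by move=> v0 t0; rewrite !dotv_lineE /t0; field; rewrite gt_eqF. Qed.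

Lemma CauchySchwarz x y : dotv x y ^+ 2 <= dotv x x * dotv y y.
Proof.
have [->|y0] := eqVneq y 0; first by rewrite dotv0r expr0n /= dotv0r mulr0.
have y0' := dotv_gt0 y0; pose t0 := - dotv x y / dotv y y; rewrite -subr_ge0.
suff -> : dotv x x * dotv y y - dotv x y ^+ 2 =
    dotv y y * dotv (x + t0 *: y) (x + t0 *: y) by rewrite mulr_ge0 ?dotv_ge0.
by rewrite dotv_lineE /t0; field; rewrite gt_eqF.
Qed.

Lemma enorm_ge0 x : 0 <= enorm x.
Proof. exact: sqrtr_ge0. Qed.

Lemma enorm_sq x : enorm x ^+ 2 = dotv x x.
Proof. by rewrite sqr_sqrtr // dotv_ge0. Qed.

Lemma enormZ t x : enorm (t *: x) = `|t| * enorm x.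
Proof.
by rewrite /enorm dotvZl dotvC dotvZl mulrA -expr2 sqrtrM ?sqr_ge0 // sqrtr_sqr.
Qed.

Lemma dotv_le_enorm x y : dotv x y <= enorm x * enorm y.
Proof.
apply: le_trans (ler_norm _) _.
rewrite -ler_sqr ?nnegrE ?mulr_ge0 ?enorm_ge0 // real_normK ?num_real //.
by rewrite exprMn !enorm_sq CauchySchwarz.
Qed.

Lemma enormD x y : enorm (x + y) <= enorm x + enorm y.
Proof.
rewrite -ler_sqr ?nnegrE ?addr_ge0 ?enorm_ge0 // enorm_sq.
rewrite dotvDl !(dotvC _ (_ + _)) !dotvDl (dotvC x y) -!enorm_sq.
by have := dotv_le_enorm y x; lra.
Qed.

Lemma enorm_line_ge y v : 0 < dotv v v ->
  exists t0, forall t, `|t - t0| * enorm v <= enorm (y + t *: v).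
Proof.
move=> v0; exists (- dotv y v / dotv v v) => t.
rewrite -ler_sqr ?nnegrE ?mulr_ge0 ?enorm_ge0 // exprMn real_normK ?num_real //.
by rewrite !enorm_sq (dotv_line_foot y t v0) lerDr dotv_ge0.
Qed.

Lemma enorm_segment_ge x y t : 0 <= t <= 1 ->
  Num.max (enorm x) (enorm y) <= enorm (y + t *: (x - y)) + enorm (x - y).
Proof.
move=> /andP[t0 t1]; set z := y + t *: (x - y).
have ex : x = z + (1 - t) *: (x - y).
  by rewrite /z -addrA -scalerDl [t + _]addrC subrK scale1r addrC subrK.
have ey : y = z + (- t) *: (x - y) by rewrite scaleNr addrK.
have := enormD z ((1 - t) *: (x - y)); have := enormD z ((- t) *: (x - y)).
rewrite -ex -ey !enormZ normrN !ger0_norm ?subr_ge0 //.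
have := enorm_ge0 (x - y); rewrite ge_max => ? ? ?; apply/andP; split; nra.
Qed.

End Euclidean.

Section Increments.
Variable R : realType.
Implicit Types (g dg : R -> R) (a b c p q : R).

Lemma increment_ge g dg c p q : p <= q ->
  (forall t : R, is_derive t (1 : R) g (dg t)) ->
  (forall t, p < t < q -> c <= dg t) -> c * (q - p) <= g q - g p.
Proof.
move=> pq dg_g cdg; have [<-|pq'] := eqVneq p q; first by rewrite !subrr mulr0.
have ltpq : p < q by rewrite lt_neqAle pq' pq.
have [|t tpq ->] := MVT ltpq (fun t _ => dg_g t).
  by apply: derivable_within_continuous => t _; apply: ex_derive.
by rewrite ler_pM2r ?subr_gt0 //; apply: cdg; rewrite in_itv in tpq.
Qed.

Lemma clamp01_interval a b : a <= b -> exists a' b', [/\ 0 <= a' <= b', b' <= 1,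
  b' - a' <= b - a & forall t, 0 < t < 1 -> (t <= a' -> t <= a) /\ (b' <= t -> b <= t)].
Proof.
pose clamp c := Num.max 0 (Num.min c 1).
have clampE c : [\/ c <= 0 /\ clamp c = 0, 1 <= c /\ clamp c = 1 |
                    0 <= c <= 1 /\ clamp c = c].
  rewrite /clamp /=; case: (leP c 1) => c1.
    by case: (leP 0 c) => c0; [constructor 3 | constructor 1; split; [exact: ltW|]].
  by constructor 2; split; [exact: ltW | exact: max_r ler01].
move=> ab; exists (clamp a), (clamp b).
case: (clampE a) (clampE b)
    => [[? ->]|[? ->]|[/andP[? ?] ->]] [[? ->]|[? ->]|[/andP[? ?] ->]];
  by split; [apply/andP; split | | | move=> t /andP[? ?]; split=> ?]; lra.
Qed.

Lemma increment_ge_except g dg a b c1 c2 :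
  (forall t : R, is_derive t (1 : R) g (dg t)) ->
  (forall t, 0 < t < 1 -> c2 <= dg t) ->
  (forall t, 0 < t < 1 -> t <= a \/ b <= t -> c1 <= dg t) ->
  c2 <= c1 -> a <= b -> c1 - (c1 - c2) * (b - a) <= g 1 - g 0.
Proof.
move=> dg_g c2dg c1dg c21.
case/clamp01_interval=> a' [b' [/andP[a'0 a'b'] b'1 ab' outside]].
have in01 p q t : 0 <= p -> q <= 1 -> p < t < q -> 0 < t < 1.
  by move=> p0 q1 /andP[? ?]; apply/andP; split; lra.
have head : c1 * (a' - 0) <= g a' - g 0.
  apply: increment_ge a'0 dg_g _ => t tI.
  have t01 := in01 _ _ _ (lexx 0) (le_trans a'b' b'1) tI.
  by apply: (c1dg t t01); left; apply: (proj1 (outside t t01)); case/andP: tI => _ /ltW.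
have mid : c2 * (b' - a') <= g b' - g a'.
  by apply: increment_ge a'b' dg_g _ => t tI; apply/c2dg/(in01 _ _ _ a'0 b'1 tI).
have tail : c1 * (1 - b') <= g 1 - g b'.
  apply: increment_ge b'1 dg_g _ => t tI.
  have t01 := in01 _ _ _ (le_trans a'0 a'b') (lexx 1) tI.
  by apply: (c1dg t t01); right; apply: (proj2 (outside t t01)); case/andP: tI => /ltW.
have : (c1 - c2) * (b' - a') <= (c1 - c2) * (b - a) by rewrite ler_wpM2l ?subr_ge0.
lra.
Qed.

End Increments.

Section SecondDerivative.
Variables (R : realType) (d : nat).
Implicit Types (U F : 'rV[R]_d -> R) (x y z u v : 'rV[R]_d).

Lemma derive_line F y v t : derivable F (y + t *: v) v ->
  is_derive t 1 (fun s => F (y + s *: v)) (derive F (y + t *: v) v).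
Proof.
have E : (fun h : R => h^-1 *: (((fun s => F (y + s *: v)) \o shift t) (h *: 1)
                                   - F (y + t *: v)))
       = (fun h => h^-1 *: ((F \o shift (y + t *: v)) (h *: v) - F (y + t *: v))).
  apply/funext => h /=; congr (_ *: (F _ - _)).
  by rewrite /shift /= scalerDl [h%:A]mulr1 addrCA.
by move=> dF; split; rewrite /derivable /derive E.
Qed.

Lemma derive_grad U x v : differentiable U x -> derive U x v = dotv (grad U x) v.
Proof.
move=> dU; rewrite deriveE // {1}(row_sum_delta v) linear_sum /dotv.
by apply: eq_bigr => i _; rewrite linearZ /= mxE -deriveE // mulrC.
Qed.

Lemma hessZ U z u (c : R) : C2 U ->
  hess U z (c *: u) (c *: u) = c ^+ 2 * hess U z u u.
Proof.
move=> [dU [ddU _]]; rewrite /hess.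
have -> : (fun w => derive U w (c *: u)) = c \*: (fun w => derive U w u).
  by apply/funext => w /=; rewrite !deriveE // linearZ.
rewrite deriveZ; last exact: diff_derivable.
by rewrite !deriveE // linearZ expr2 scalerA.
Qed.

Lemma hess_unit_dir U v : C2 U -> v != 0 ->
  exists2 u, enorm u = 1 & forall z, hess U z v v = dotv v v * hess U z u u.
Proof.
move=> C2U v0; have s0 : 0 < enorm v by rewrite sqrtr_gt0 dotv_gt0.
set u := (enorm v)^-1 *: v; have vu : v = enorm v *: u.
  by rewrite /u scalerA divff ?gt_eqF // scale1r.
exists u => [|z]; last by rewrite {1 2}vu hessZ // enorm_sq.
by rewrite enormZ ger0_norm ?invr_ge0 ?enorm_ge0 // mulVf // gt_eqF.
Qed.

Lemma grad_increment_ge_except U x y (a b c1 c2 : R) : C2 U ->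
  (forall t, 0 < t < 1 -> c2 <= hess U (y + t *: (x - y)) (x - y) (x - y)) ->
  (forall t, 0 < t < 1 -> t <= a \/ b <= t ->
     c1 <= hess U (y + t *: (x - y)) (x - y) (x - y)) ->
  c2 <= c1 -> a <= b ->
  c1 - (c1 - c2) * (b - a) <= dotv (grad U x - grad U y) (x - y).
Proof.
move=> [dU [ddU _]] c2H c1H c21 ab; set v := x - y.
have G0 : derive U (y + 0 *: v) v = derive U y v by rewrite scale0r addr0.
have G1 : derive U (y + 1 *: v) v = derive U x v by rewrite scale1r /v addrC subrK.
rewrite dotvBl -!derive_grad // -G0 -G1.
apply: (@increment_ge_except _ (fun s => derive U (y + s *: v) v) _ _ _ _ _ _
  c2H c1H c21 ab) => t.
exact/derive_line/diff_derivable.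
Qed.

End SecondDerivative.

Lemma strong_convexity_margin (R : realFieldType) (m L K s : R) :
  0 < m <= L -> 0 <= K -> 0 < s -> 8 * K * L / m <= s ->
  m / 2 * s ^+ 2 <= m * s ^+ 2 - (m * s ^+ 2 + L * s ^+ 2) * (2 * K / s).
Proof.
move=> /andP[m0 mL] K0 s0; rewrite ler_pdivrMr // => KLs.
have -> : (m * s ^+ 2 + L * s ^+ 2) * (2 * K / s) = 2 * (m + L) * K * s.
  by field; rewrite gt_eqF.
have : 4 * (m + L) * K * s <= s * m * s by rewrite ler_pM2r //; nra.
lra.
Qed.

Section StrongConvexityOutsideBall.
Variables (R : realType) (d : nat) (U : 'rV[R]_d -> R) (L m K : R).
Hypotheses (C2U : C2 U) (m_gt0 : 0 < m) (K_ge0 : 0 <= K).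
Hypothesis hess_le : forall x y z, enorm y = 1 -> enorm z = 1 -> `|hess U x y z| <= L.
Hypothesis hess_ge : forall x y, K <= enorm x -> enorm y = 1 -> m <= hess U x y y.
Implicit Types (x y z v : 'rV[R]_d).

Lemma hess_ge_lower v z : v != 0 -> - L * dotv v v <= hess U z v v.
Proof.
move=> v0; have [u u1 ->] := hess_unit_dir C2U v0.
rewrite [_ * hess _ _ _ _]mulrC ler_pM2r ?dotv_gt0 //.
by move: (hess_le z u1 u1); rewrite ler_norml => /andP[].
Qed.

Lemma hess_ge_outside v z : v != 0 -> K <= enorm z -> m * dotv v v <= hess U z v v.
Proof.
move=> v0 Kz; have [u u1 ->] := hess_unit_dir C2U v0.
by rewrite [_ * hess _ _ _ _]mulrC ler_pM2r ?dotv_gt0 ?hess_ge.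
Qed.

Lemma grad_monotone_outside x y : x - y != 0 ->
  (forall t, 0 < t < 1 -> K <= enorm (y + t *: (x - y))) ->
  m * dotv (x - y) (x - y) <= dotv (grad U x - grad U y) (x - y).
Proof.
move=> v0 Kseg; have hmB t tI := hess_ge_outside v0 (Kseg t tI).
have := grad_increment_ge_except (a := 0) (b := 0) C2U hmB (fun t tI _ => hmB t tI).
by rewrite !subrr mul0r subr0; apply.
Qed.

Lemma grad_monotone_long_segment x y : x - y != 0 ->
  K + 8 * K * L / m <= Num.max (enorm x) (enorm y) -> 8 * K * L / m <= enorm (x - y) ->
  m / 2 * dotv (x - y) (x - y) <= dotv (grad U x - grad U y) (x - y).
Proof.
move=> v0 hxy far; have [u u1 _] := hess_unit_dir C2U v0.
have s0 : 0 < enorm (x - y) by rewrite sqrtr_gt0 dotv_gt0.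
have mL : m <= L.
  have Kxy : K <= Num.max (enorm x) (enorm y).
    apply: le_trans hxy; rewrite lerDl !mulr_ge0 ?invr_ge0 ?(ltW m_gt0) //.
    exact: le_trans (normr_ge0 _) (hess_le x u1 u1).
  have [z Kz] : exists z, K <= enorm z.
    by move: Kxy; rewrite le_max => /orP[] Kz; [exists x | exists y].
  exact: le_trans (hess_ge Kz u1) (le_trans (ler_norm _) (hess_le z u1 u1)).
have [t0 ht0] := enorm_line_ge y (dotv_gt0 v0).
set k := K / enorm (x - y).
have hout t : t <= t0 - k \/ t0 + k <= t -> K <= enorm (y + t *: (x - y)).
  move=> ht; apply: le_trans (ht0 t); rewrite -ler_pdivrMr // -/k ler_normr.
  by case: ht => ht; apply/orP; [right | left]; lra.
have := grad_increment_ge_except (a := t0 - k) (b := t0 + k) C2U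
  (fun t _ => hess_ge_lower _ v0) (fun t _ ht => hess_ge_outside v0 (hout t ht)).
have LB : - L * dotv (x - y) (x - y) <= m * dotv (x - y) (x - y).
  rewrite ler_pM2r ?dotv_gt0 // (le_trans _ (ltW m_gt0)) //.
  by rewrite oppr_le0 (le_trans (ltW m_gt0) mL).
have k0 : 0 <= k by rewrite divr_ge0 ?(ltW s0).
have ab : t0 - k <= t0 + k by lra.
move=> /(_ LB ab) /(le_trans _); apply.
have -> : t0 + k - (t0 - k) = 2 * K / enorm (x - y) by rewrite /k; ring.
by rewrite -enorm_sq mulNr opprK strong_convexity_margin ?m_gt0.
Qed.

End StrongConvexityOutsideBall.

Theorem lemma9 (R : realType) (d : nat) (U : 'rV[R]_d -> R) (L m K : R) :
  C2 U ->
  grad U 0 = 0 ->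
  (* sup_x ||D^2 U(x)|| <= L  (operator norm w.r.t. the Euclidean norm) *)
  (forall x y z, enorm y = 1 -> enorm z = 1 -> `|hess U x y z| <= L) ->
  0 < m -> 0 <= K ->
  (forall x y, K <= enorm x -> enorm y = 1 -> m <= hess U x y y) ->
  forall x y : 'rV[R]_d,
    K + 8 * K * L / m <= Num.max (enorm x) (enorm y) ->
    (m / 2) * enorm (x - y) ^+ 2 <= dotv (grad U x - grad U y) (x - y).
Proof.
move=> C2U _ hess_le m_gt0 K_ge0 hess_ge x y hxy; rewrite enorm_sq.
have [->|v0] := eqVneq (x - y) 0; first by rewrite !dotv0r mulr0.
have [near|far] := ltP (enorm (x - y)) (8 * K * L / m); last first.
  exact: (grad_monotone_long_segment C2U m_gt0 K_ge0 hess_le hess_ge v0 hxy far).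
apply: le_trans (grad_monotone_outside C2U hess_ge v0 _).
  by rewrite ler_pM2r ?dotv_gt0 // ler_pdivrMr // ler_peMr ?(ltW m_gt0) // ler1n.
move=> t /andP[/ltW t0 /ltW t1]; have := enorm_segment_ge x y (t := t).
by rewrite t0 t1 => /(_ isT); lra.
Qed.
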